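(* Let $p\ge 5$ be a prime and $n,k\in\mathbb{N}$ with $n>k$. Then for $1\le j\le \frac{p-1}{2}$, \[ \binom{2kp+2j}{kp+j}\binom{2np-2kp-2j}{np-kp-j}\equiv \frac{2p}{j}\binom{2k}{k}\binom{2n-2k-2}{n-k-1}(2k+1-2n)\pmod{p^2}, \] and for $\frac{p+1}{2}\le j\le p-1$, \[ \binom{2kp+2j}{kp+j}\binom{2np-2kp-2j}{np-kp-j}\equiv \frac{2p}{j}\binom{2k}{k}\binom{2n-2k-2}{n-k-1}(2k+1)\pmod{p^2}. \]
   Context: For rationals $a,b$, $a\equiv b\pmod{p^m}$ means $(a-b)/p^m$ is a rational number whose denominator is not divisible by $p$. *)

From HB Require Import structures.
From mathcomp Require Import all_boot all_order all_algebra.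
Set Implicit Arguments. Unset Strict Implicit. Unset Printing Implicit Defensive.
Import Order.TTheory GRing.Theory Num.Theory.
Local Open Scope ring_scope.

(* For rationals a, b: a = b (mod p^m) iff (a - b)/p^m is a rational whose
   (reduced) denominator is not divisible by p. *)
Definition rat_congr (a b : rat) (p m : nat) : Prop :=
  ~~ (p %| `|denq ((a - b) / (p ^ m)%:R)|)%N.

(* Write x! = p^(x/p) (x/p)! G(x), where G(x) is the product of the integers
   in [1, x] prime to p; by Wilson, G(x) = (-1)^(x/p) (x mod p)! (mod p).
   For x = kp + j with 2j < p this gives C(2x, x) = C(2k, k) C(2j, j) (mod p),
   whereas doubling y = Np + (p - j) in base p carries once, so C(2y, y) = p u
   with u ((p - j)!)^2 = -(2N + 1) C(2N, N) (p - 2j)! (mod p).  The reflection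
   formula t! (p - 1 - t)! = (-1)^(t + 1) (mod p) turns (p - 2j)! / ((p - j)!)^2
   into 2 / (j C(2j, j)), which yields the first congruence.  The second one is
   the first with (j, k) replaced by (p - j, n - 1 - k), because
   1 / (p - j) = -1 / j (mod p). *)

From mathcomp Require Import all_boot all_order all_algebra.
From mathcomp Require Import zify ring.
Set Implicit Arguments. Unset Strict Implicit. Unset Printing Implicit Defensive.
Import GRing.Theory Num.Theory.
Local Open Scope ring_scope.

Lemma denq_dvd_of_mul_int (x : rat) (d : nat) (c : int) :
  x * d%:R = c%:~R -> (`|denq x| %| d)%N.
Proof.
move=> xd_c.
have num_d : numq x * d%:Z = c * denq x.
  apply: (@intr_inj rat); rewrite !rmorphM /= numqE -xd_c.
  by rewrite -mulrA [_ * d%:~R]mulrC mulrA.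
have : (`|denq x| %| `|numq x| * d)%N.
  by apply/dvdnP; exists `|c|%N; rewrite -[d]/(`|d%:Z|%N) -abszM num_d abszM.
by rewrite Gauss_dvdr // coprime_sym coprime_num_den.
Qed.

Lemma rat_congrP (a b : rat) (p m : nat) : (0 < p)%N ->
  rat_congr a b p m <->
  exists d : nat, exists2 z : int,
    ~~ (p %| d)%N /\ ((p ^ m)%:Z %| z)%Z & (a - b) * d%:R = z%:~R.
Proof.
move=> p_gt0; have pm_neq0 : (p ^ m)%:R != 0 :> rat.
  by rewrite pnatr_eq0 -lt0n expn_gt0 p_gt0.
split=> [p'den | [d [z [p'd /dvdzP[c ->] abd]]]].
  exists `|denq ((a - b) / (p ^ m)%:R)|%N, (numq ((a - b) / (p ^ m)%:R) * (p ^ m)%:Z).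
    by split; last exact: dvdz_mull.
  rewrite rmorphM /= numqE natr_absz gtr0_norm ?denq_gt0 //.
  by rewrite mulrAC divfK // -mulrA mulrC.
apply: contra p'd => /dvdn_trans; apply; apply: (@denq_dvd_of_mul_int _ _ c).
by rewrite mulrAC abd rmorphM /= mulfK.
Qed.

Lemma rat_congr_trans (p m : nat) (a b c : rat) : prime p ->
  rat_congr a b p m -> rat_congr b c p m -> rat_congr a c p m.
Proof.
move=> p_pr; have p_gt0 := prime_gt0 p_pr.
move=> /(rat_congrP _ _ _ p_gt0) [d1 [z1 [p'd1 pm_z1] abd1]].
move=> /(rat_congrP _ _ _ p_gt0) [d2 [z2 [p'd2 pm_z2] bcd2]].
apply/(rat_congrP _ _ _ p_gt0); exists (d1 * d2)%N, (z1 * d2%:Z + z2 * d1%:Z).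
  by rewrite Euclid_dvdM // negb_or p'd1 p'd2; split=> //; rewrite rpredD ?dvdz_mulr.
rewrite natrM rmorphD !rmorphM /= -abd1 -bcd2; ring.
Qed.

Lemma rat_congr_div_compl (p j m : nat) : prime p -> (0 < j < p)%N ->
  rat_congr (- (p * m)%:R / (p - j)%:R) ((p * m)%:R / j%:R) p 2.
Proof.
move=> p_pr /andP[j_gt0 j_ltp]; apply/rat_congrP; first exact: prime_gt0.
exists (j * (p - j))%N, (- (p ^ 2 * m)%N%:Z).
  split; last by rewrite rpredN PoszM dvdz_mulr.
  by rewrite Euclid_dvdM // negb_or; apply/andP; split; apply/negP => /dvdn_leq; lia.
rewrite rmorphN /= -!pmulrn !natrM natrB ?(ltnW j_ltp) //.
by field; rewrite -natrB ?(ltnW j_ltp) // !pnatr_eq0 -!lt0n subn_gt0 j_gt0.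
Qed.

Fixpoint fact_pfree (p x : nat) : nat :=
  if x is y.+1 then ((if p %| y.+1 then 1 else y.+1) * fact_pfree p y)%N else 1%N.

Lemma fact_pfreeE (p x : nat) : (0 < p)%N ->
  x`! = (p ^ (x %/ p) * (x %/ p)`! * fact_pfree p x)%N.
Proof.
move=> p_gt0; elim: x => [|x IHx]; first by rewrite div0n.
rewrite factS /= divnS //; case: ifP => [p_dvd | _]; last by rewrite add0n IHx; ring.
have x1E : x.+1 = (p * (x %/ p).+1)%N by rewrite -(divnK p_dvd) divnS // p_dvd mulnC.
by rewrite add1n factS expnS IHx {1}x1E; ring.
Qed.

Lemma fact_double (q : nat) : ((2 * q)`! = 'C(2 * q, q) * (q`! * q`!))%N.
Proof.
rewrite -{1}(bin_fact (_ : q <= 2 * q)%N); last by lia.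
by rewrite (_ : 2 * q - q = q)%N //; lia.
Qed.

(* [c] is the carry produced when [x] is doubled in base [p]. *)
Lemma bin_mid_pfree (p x c : nat) : (0 < p)%N ->
  ((2 * x) %/ p = 2 * (x %/ p) + c)%N -> (c <= 1)%N ->
  ('C(2 * x, x) * fact_pfree p x ^ 2
   = p ^ c * (2 * (x %/ p) + 1) ^ c * 'C(2 * (x %/ p), x %/ p) * fact_pfree p (2 * x))%N.
Proof.
move=> p_gt0 carryE c_le1; set q := (x %/ p)%N.
have factQ : ((2 * q + c)`! = (2 * q + 1) ^ c * ('C(2 * q, q) * (q`! * q`!)))%N.
  by case: c {carryE} c_le1 => [|[|//]] _; rewrite ?addn0 ?addn1 ?factS fact_double ?mul1n.
set s := (p ^ q * q`!)%N; have s_gt0 : (0 < s * s)%N by rewrite !muln_gt0 expn_gt0 p_gt0 fact_gt0.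
apply/eqP; rewrite -(eqn_pmul2r s_gt0); apply/eqP.
have := fact_double x; rewrite (fact_pfreeE (2 * x) p_gt0) (fact_pfreeE x p_gt0).
rewrite carryE factQ -/q mul2n -addnn !expnD => factE.
by rewrite /s; lia.
Qed.

Section FactorialsModP.

Variable p : nat.
Hypothesis p_pr : prime p.

Let p_gt0 : (0 < p)%N. Proof. exact: prime_gt0. Qed.
Let natF_eq0 n : (n%:R == 0 :> 'F_p) = (p %| n)%N.
Proof. by rewrite (dvdn_pcharf (pchar_Fp p_pr)). Qed.

Lemma fact_Fp_neq0 r : (r < p)%N -> r`!%:R != 0 :> 'F_p.
Proof.
rewrite natF_eq0; elim: r => [|r IHr] r_ltp; first by rewrite dvdn1 neq_ltn prime_gt1 ?orbT.
rewrite factS Euclid_dvdM // negb_or IHr ?andbT; last exact: ltnW.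
by apply/negP => /dvdn_leq; lia.
Qed.

Lemma fact_pred_Fp : (p.-1)`!%:R = -1 :> 'F_p.
Proof.
apply/eqP; rewrite -addr_eq0 -mulrSr natF_eq0.
by rewrite -Wilson ?prime_gt1.
Qed.

Lemma fact_pfree_Fp x :
  (fact_pfree p x)%:R = (-1) ^+ (x %/ p) * (x %% p)`!%:R :> 'F_p.
Proof.
elim: x => [|x IHx]; first by rewrite div0n mod0n mul1r.
rewrite /= natrM IHx divnS // modnS; case: ifP => [p_dvd | p'x1]; last first.
  by rewrite add0n factS natrM -(Fp_nat_mod p_pr) modnS p'x1; ring.
have xmodE : (x %% p = p.-1)%N.
  have x1_dvd : (p %| (x %% p).+1)%N.
    by rewrite -(dvdn_addr _ (dvdn_mull (x %/ p) (dvdnn p))) addnS -divn_eq.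
  have := ltn_pmod x p_gt0; have := dvdn_leq (ltn0Sn _) x1_dvd; lia.
by rewrite xmodE fact_pred_Fp add1n exprS fact0; ring.
Qed.

Lemma fact_mul_fact_compl_Fp t : (t < p)%N ->
  t`!%:R * (p.-1 - t)`!%:R = (-1) ^+ t.+1 :> 'F_p.
Proof.
elim: t => [|t IHt] t_ltp; first by rewrite mul1r subn0 fact_pred_Fp.
have pred_tE : (p.-1 - t = (p.-1 - t.+1).+1)%N by lia.
have oppE : (p.-1 - t)%:R = - t.+1%:R :> 'F_p.
  by apply/eqP; rewrite -addr_eq0 -natrD natF_eq0 (_ : _ + _ = p)%N //; lia.
have := IHt (ltnW t_ltp); rewrite {1}pred_tE factS natrM -pred_tE oppE factS natrM.
by move=> IH_t; rewrite exprS -IH_t; ring.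
Qed.

Lemma bin_mid_Fp_small q r : (2 * r < p)%N ->
  'C(2 * (q * p + r), q * p + r)%:R = 'C(2 * q, q)%:R * 'C(2 * r, r)%:R :> 'F_p.
Proof.
move=> r2_ltp; set x := (q * p + r)%N.
have xdivE : (x %/ p = q)%N by rewrite divnMDl // divn_small ?addn0 //; lia.
have xmodE : (x %% p = r)%N by rewrite modnMDl modn_small //; lia.
have x2E : (2 * x = 2 * q * p + 2 * r)%N by rewrite /x; ring.
have x2divE : ((2 * x) %/ p = 2 * q)%N by rewrite x2E divnMDl // divn_small ?addn0.
have x2modE : ((2 * x) %% p = 2 * r)%N by rewrite x2E modnMDl modn_small.
have := @bin_mid_pfree p x 0 p_gt0; rewrite addn0 xdivE => /(_ x2divE (leq0n 1)).
move=> /(congr1 (fun n => n%:R : 'F_p)); rewrite !natrM !natrX !expr0 !mul1r.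
rewrite !fact_pfree_Fp x2divE x2modE xdivE xmodE -/x fact_double !natrM.
rewrite mulrACA -expr2 sqrr_sign mul1r (mulnC 2 q) exprM sqrr_sign mul1r => binE.
have r_ltp : (r < p)%N by lia.
by apply: (mulIf (mulf_neq0 (fact_Fp_neq0 r_ltp) (fact_Fp_neq0 r_ltp))); rewrite binE; ring.
Qed.

Lemma bin_mid_Fp_carry q r : (r < p)%N -> (p <= 2 * r)%N ->
  exists2 u : nat, 'C(2 * (q * p + r), q * p + r) = (p * u)%N &
    u%:R * r`!%:R ^+ 2 = - ((2 * q + 1)%:R * 'C(2 * q, q)%:R * (2 * r - p)`!%:R) :> 'F_p.
Proof.
move=> r_ltp p_le_r2; set x := (q * p + r)%N.
have xdivE : (x %/ p = q)%N by rewrite divnMDl // divn_small ?addn0.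
have xmodE : (x %% p = r)%N by rewrite modnMDl modn_small.
have x2E : (2 * x = (2 * q + 1) * p + (2 * r - p))%N by rewrite /x; lia.
have x2divE : ((2 * x) %/ p = 2 * q + 1)%N.
  by rewrite x2E divnMDl // divn_small ?addn0 //; lia.
have x2modE : ((2 * x) %% p = 2 * r - p)%N by rewrite x2E modnMDl modn_small //; lia.
have := @bin_mid_pfree p x 1 p_gt0; rewrite xdivE => /(_ x2divE (leqnn 1)).
rewrite !expn1 -!mulnA => binE.
have Gx_Fp : (fact_pfree p x)%:R = (-1) ^+ q * r`!%:R :> 'F_p.
  by rewrite fact_pfree_Fp xdivE xmodE.
have p'Gx : ~~ (p %| fact_pfree p x)%N.
  by rewrite -natF_eq0 Gx_Fp mulf_eq0 negb_or signr_eq0 fact_Fp_neq0.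
have p_dvd_bin : (p %| 'C(2 * x, x))%N.
  have p_coGx2 : coprime p (fact_pfree p x ^ 2) by rewrite coprimeXr // prime_coprime.
  by rewrite -(Gauss_dvdl _ p_coGx2) binE dvdn_mulr.
exists ('C(2 * x, x) %/ p)%N; first by rewrite [RHS]mulnC divnK.
have /(congr1 (fun n => n%:R : 'F_p)) : ('C(2 * x, x) %/ p * fact_pfree p x ^ 2
    = (2 * q + 1) * ('C(2 * q, q) * fact_pfree p (2 * x)))%N.
  by apply/eqP; rewrite -(eqn_pmul2l p_gt0) mulnA (mulnC p) divnK // binE.
rewrite !natrM Gx_Fp fact_pfree_Fp x2divE x2modE mulrACA -expr2 sqrr_sign mul1r -expr2.
by rewrite exprD (mulnC 2 q) exprM sqrr_sign => ->; ring.
Qed.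

Lemma bin_mid_fact_compl_Fp j : (0 < j)%N -> (2 * j < p)%N ->
  j%:R * 'C(2 * j, j)%:R * (p - 2 * j)`!%:R = 2 * (p - j)`!%:R ^+ 2 :> 'F_p.
Proof.
move=> j_gt0 j2_ltp.
set A : 'F_p := ((2 * j).-1)`!%:R; set B : 'F_p := (j.-1)`!%:R.
have A_neq0 : A != 0 by apply: fact_Fp_neq0; lia.
have B_neq0 : B != 0 by apply: fact_Fp_neq0; lia.
have j_neq0 : j%:R != 0 :> 'F_p by rewrite natF_eq0; apply/negP => /dvdn_leq; lia.
have AX : A * (p - 2 * j)`!%:R = 1.
  rewrite -(_ : p.-1 - (2 * j).-1 = p - 2 * j)%N; last by lia.
  rewrite fact_mul_fact_compl_Fp ?prednK ?muln_gt0 // ?(mulnC 2 j) ?exprM ?sqrr_sign //; lia.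
have BY : B * (p - j)`!%:R = (-1) ^+ j.
  rewrite -(_ : p.-1 - j.-1 = p - j)%N; last by lia.
  by rewrite fact_mul_fact_compl_Fp ?prednK //; lia.
have jCB : j%:R * 'C(2 * j, j)%:R * B ^+ 2 = 2 * A :> 'F_p.
  have factE n : (0 < n)%N -> n`! = (n * n.-1`!)%N by case: n => // n _; rewrite factS.
  apply: (mulIf j_neq0); have := fact_double j.
  rewrite (factE (2 * j)) ?muln_gt0 // (factE j) //.
  move=> /(congr1 (fun n => n%:R : 'F_p)); rewrite !natrM -/A -/B => factE2j.
  apply/eqP; rewrite -subr_eq0 (_ : _ - _ = 'C(2 * j, j)%:R * (j%:R * B) ^+ 2 - (2 * j)%:R * A).
    by rewrite natrM factE2j expr2 subrr.
  by rewrite natrM; ring.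
apply: (mulIf (mulf_neq0 A_neq0 (expf_neq0 2 B_neq0))).
rewrite (_ : _ * _ * _ * _ = j%:R * 'C(2 * j, j)%:R * B ^+ 2 * (A * (p - 2 * j)`!%:R)); last by ring.
rewrite jCB AX (_ : 2 * _ ^+ 2 * _ = 2 * A * (B * (p - j)`!%:R) ^+ 2); last by ring.
by rewrite BY sqrr_sign.
Qed.

End FactorialsModP.

Lemma bin_mid_pair_congr (p k N j : nat) : prime p -> (0 < j)%N -> (2 * j < p)%N ->
  rat_congr ('C(2 * (k * p + j), k * p + j) * 'C(2 * (N * p + (p - j)), N * p + (p - j)))%:R
    ((2 * p)%:R / j%:R * 'C(2 * k, k)%:R * 'C(2 * N, N)%:R * - (2 * N + 1)%:R) p 2.
Proof.
move=> p_pr j_gt0 j2_ltp.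
have pj_ltp : (p - j < p)%N by lia.
have [|u binE uE] := bin_mid_Fp_carry p_pr N pj_ltp; first by lia.
rewrite (_ : 2 * (p - j) - p = p - 2 * j)%N in uE; last by lia.
rewrite binE; set a := 'C(2 * (k * p + j), k * p + j).
set w := (j * (a * u) + 2 * 'C(2 * k, k) * 'C(2 * N, N) * (2 * N + 1))%N.
have p_dvd_w : (p %| w)%N.
  have Y_neq0 := fact_Fp_neq0 p_pr pj_ltp.
  rewrite (dvdn_pcharf (pchar_Fp p_pr)) /w natrD !natrM bin_mid_Fp_small //.
  have keyE := bin_mid_fact_compl_Fp p_pr j_gt0 j2_ltp.
  move: uE keyE; set Y := (p - j)`!%:R; set X := (p - 2 * j)`!%:R => uE keyE.
  apply/eqP; apply: (mulIf (expf_neq0 2 Y_neq0)); rewrite mul0r.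
  set A := 'C(2 * k, k)%:R; set B := 'C(2 * N, N)%:R; set M := (2 * N + 1)%:R.
  rewrite [LHS](_ : _ = A * 'C(2 * j, j)%:R * j%:R * (u%:R * Y ^+ 2) + 2 * A * B * M * Y ^+ 2);
    last by ring.
  rewrite uE [X in X + _](_ : _ = - (A * B * M) * (j%:R * 'C(2 * j, j)%:R * X)); last by ring.
  by rewrite keyE; ring.
apply/(rat_congrP _ _ _ (prime_gt0 p_pr)); exists j, (p * w)%N%:Z.
  split; first by apply/negP => /dvdn_leq; lia.
  by rewrite dvdzE /= expnS expn1 dvdn_pmul2l ?prime_gt0.
rewrite -pmulrn /w !natrM !natrD !natrM; field.
by rewrite pnatr_eq0 -lt0n.
Qed.

Lemma bin_pair_reindex (p n k j : nat) : (k < n)%N -> (j <= p)%N ->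
  ('C(2 * k * p + 2 * j, k * p + j) * 'C(2 * n * p - 2 * k * p - 2 * j, n * p - k * p - j)
   = 'C(2 * (k * p + j), k * p + j)
     * 'C(2 * ((n - k - 1) * p + (p - j)), (n - k - 1) * p + (p - j)))%N.
Proof.
move=> k_lt_n j_le_p; have [N ->] : exists N, n = (k + N.+1)%N by exists (n - k).-1; lia.
rewrite (_ : k + N.+1 - k - 1 = N)%N; last by lia.
by congr ('C(_, _) * 'C(_, _)); lia.
Qed.

Theorem mainTheorem3 (p n k : nat) :
  prime p -> (5 <= p)%N -> (k < n)%N ->
  (forall j : nat, (1 <= j)%N -> (j <= (p - 1) %/ 2)%N ->
     rat_congr
       (('C(2 * k * p + 2 * j, k * p + j) * 'C(2 * n * p - 2 * k * p - 2 * j, n * p - k * p - j))%:R : rat)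
       ((2 * p)%:R / j%:R * ('C(2 * k, k))%:R * ('C(2 * n - 2 * k - 2, n - k - 1))%:R
          * ((2 * k + 1)%:R - (2 * n)%:R))
       p 2)
  /\
  (forall j : nat, ((p + 1) %/ 2 <= j)%N -> (j <= p - 1)%N ->
     rat_congr
       (('C(2 * k * p + 2 * j, k * p + j) * 'C(2 * n * p - 2 * k * p - 2 * j, n * p - k * p - j))%:R : rat)
       ((2 * p)%:R / j%:R * ('C(2 * k, k))%:R * ('C(2 * n - 2 * k - 2, n - k - 1))%:R
          * (2 * k + 1)%:R)
       p 2).
Proof.
move=> p_pr p_ge5 k_lt_n; set N := (n - k - 1)%N.
have p_mod2 : (p %% 2 = 1)%N.
  by rewrite modn2; case: (even_prime p_pr) => [p2 | ->] //; rewrite p2 in p_ge5.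
rewrite (_ : 2 * n - 2 * k - 2 = 2 * N)%N; last by lia.
split=> j j_ge j_le; (rewrite bin_pair_reindex -/N //; last by lia).
  have j2_ltp : (2 * j < p)%N by lia.
  rewrite (_ : (2 * k + 1)%:R - (2 * n)%:R = - (2 * N + 1)%:R :> rat).
    exact: bin_mid_pair_congr.
  have -> : (2 * n = 2 * N + 1 + (2 * k + 1))%N by lia.
  by rewrite natrD; ring.
have pj_gt0 : (0 < p - j)%N by lia.
have pj2_ltp : (2 * (p - j) < p)%N by lia.
have := bin_mid_pair_congr N k p_pr pj_gt0 pj2_ltp.
have j_le_p : (j <= p)%N by lia.
rewrite subKn // mulnC => /(rat_congr_trans p_pr); apply.
set m := (2 * 'C(2 * N, N) * 'C(2 * k, k) * (2 * k + 1))%N.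
have j_ltp : (0 < j < p)%N by lia.
have -> : (2 * p)%:R / (p - j)%:R * 'C(2 * N, N)%:R * 'C(2 * k, k)%:R * - (2 * k + 1)%:R
    = - (p * m)%:R / (p - j)%:R :> rat by rewrite /m !natrM; ring.
have -> : (2 * p)%:R / j%:R * 'C(2 * k, k)%:R * 'C(2 * N, N)%:R * (2 * k + 1)%:R
    = (p * m)%:R / j%:R :> rat by rewrite /m !natrM; ring.
exact: rat_congr_div_compl.
Qed.
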